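(* Let $\mathcal C$ be a pointed category with finite coproducts and $E\in\mathcal C$ such that every object of $\mathcal C$ is isomorphic to a finite coproduct $E^{\vee k}$ of copies of $E$. Let $F,G\colon\mathcal C\to Ab$ be reduced functors which are polynomial of degree $\le n$, and let $\phi\colon F\to G$ be a natural transformation. Then the following are equivalent: (1) $\phi$ is a natural isomorphism; (2) $\phi_{E^{\vee k}}$ is an isomorphism for all $k\le n$; (3) $\phi_{E^{\vee n}}$ is an isomorphism; (4) $cr_k(\phi)_{E,\dots,E}$ is an isomorphism for all $1\le k\le n$.
   Context: - For a functor $F\colon\mathcal C\to Ab$: $cr_1F(X)=\ker(F(X)\to F(0))$ and $cr_2F(X,Y)=\ker\big((F(r_1),F(r_2))\colon F(X\vee Y)\to F(X)\oplus F(Y)\big)$, where $r_k$ are the coproduct retractions. - For $n\ge3$, $cr_nF(X_1,\dots,X_n)=cr_2\big(cr_{n-1}F(-,X_3,\dots,X_n)\big)(X_1,X_2)$. - $F$ is polynomial of degree $\le n$ if $cr_{n+1}F=0$. - $F$ is reduced if $F(0)=0$. - $cr_k(\phi)$ denotes the induced natural transformation $cr_kF\to cr_kG$. *)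

From HB Require Import structures.
From mathcomp Require Import all_boot all_algebra.
Set Implicit Arguments. Unset Strict Implicit. Unset Printing Implicit Defensive.
Import GRing.Theory.
Local Open Scope ring_scope.

(* A pointed category with (chosen) finite coproducts: a zero object
   (initial and terminal) and binary coproducts.  Composition is written in
   diagrammatic order: comp f g = g o f. *)
Record PCCat : Type := PCCat_mk {
  Obj : Type;
  Hom : Obj -> Obj -> Type;
  idm : forall X, Hom X X;
  comp : forall X Y Z, Hom X Y -> Hom Y Z -> Hom X Z;
  comp_idl : forall X Y (f : Hom X Y), comp (idm X) f = f;
  comp_idr : forall X Y (f : Hom X Y), comp f (idm Y) = f;
  comp_assoc : forall X Y Z W (f : Hom X Y) (g : Hom Y Z) (h : Hom Z W),
      comp f (comp g h) = comp (comp f g) h;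
  zero : Obj;
  to_zero : forall X, Hom X zero;
  to_zero_uniq : forall X (f : Hom X zero), f = to_zero X;
  from_zero : forall X, Hom zero X;
  from_zero_uniq : forall X (f : Hom zero X), f = from_zero X;
  cop : Obj -> Obj -> Obj;
  inl : forall X Y, Hom X (cop X Y);
  inr : forall X Y, Hom Y (cop X Y);
  copair : forall X Y Z, Hom X Z -> Hom Y Z -> Hom (cop X Y) Z;
  copair_inl : forall X Y Z (f : Hom X Z) (g : Hom Y Z),
      comp (inl X Y) (copair f g) = f;
  copair_inr : forall X Y Z (f : Hom X Z) (g : Hom Y Z),
      comp (inr X Y) (copair f g) = g;
  copair_uniq : forall X Y Z (h : Hom (cop X Y) Z),
      h = copair (comp (inl X Y) h) (comp (inr X Y) h)
}.

Arguments Hom {C} : rename.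
Arguments idm {C} X : rename.
Arguments comp {C X Y Z} : rename.
Arguments zero C : rename.
Arguments to_zero {C} X : rename.
Arguments from_zero {C} X : rename.
Arguments cop {C} : rename.
Arguments inl {C} X Y : rename.
Arguments inr {C} X Y : rename.
Arguments copair {C X Y Z} : rename.

Section Cat.
Variable C : PCCat.

Definition iso (X Y : Obj C) : Prop :=
  exists (f : Hom X Y) (g : Hom Y X), comp f g = idm X /\ comp g f = idm Y.

Definition zmor (X Y : Obj C) : Hom X Y := comp (to_zero X) (from_zero Y).

Definition r1 (X Y : Obj C) : Hom (cop X Y) X := copair (idm X) (zmor Y X).
Definition r2 (X Y : Obj C) : Hom (cop X Y) Y := copair (zmor X Y) (idm Y).

Definition copmap (A B A' B' : Obj C) (f : Hom A A') (g : Hom B B') :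
  Hom (cop A B) (cop A' B') := copair (comp f (inl A' B')) (comp g (inr A' B')).

(* copl X [:: Y1; ...; Ym] = (...((X v Y1) v Y2) ...) v Ym *)
Fixpoint copl (X : Obj C) (l : seq (Obj C)) : Obj C :=
  match l with [::] => X | Y :: l' => copl (cop X Y) l' end.

Fixpoint mapl (l : seq (Obj C)) : forall X X', Hom X X' -> Hom (copl X l) (copl X' l) :=
  match l return forall X X', Hom X X' -> Hom (copl X l) (copl X' l) with
  | [::] => fun X X' f => f
  | Y :: l' => fun X X' f => mapl l' (copmap f (idm Y))
  end.

Definition Epow (E : Obj C) (k : nat) : Obj C :=
  match k with 0 => zero C | k'.+1 => copl E (nseq k' E) end.

End Cat.
Arguments iso {C}.
Arguments zmor {C}.
Arguments r1 {C}.
Arguments r2 {C}.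
Arguments copmap {C A B A' B'}.
Arguments copl {C}.
Arguments mapl {C} l {X X'}.
Arguments Epow {C}.

Record AbFunctor (C : PCCat) := AbFunctor_mk {
  Fo : Obj C -> zmodType;
  Fm : forall X Y : Obj C, Hom X Y -> Fo X -> Fo Y;
  Fm_sub : forall X Y (f : Hom X Y) (a b : Fo X), Fm f (a - b) = Fm f a - Fm f b;
  Fm_id : forall X (a : Fo X), Fm (idm X) a = a;
  Fm_comp : forall X Y Z (f : Hom X Y) (g : Hom Y Z) (a : Fo X),
      Fm (comp f g) a = Fm g (Fm f a)
}.
Arguments Fo {C} F X : rename.
Arguments Fm {C} F {X Y} f : rename.

Record NatTrans (C : PCCat) (F G : AbFunctor C) := NatTrans_mk {
  nt : forall X, Fo F X -> Fo G X;
  nt_sub : forall X (a b : Fo F X), nt (a - b) = nt a - nt b;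
  nt_nat : forall X Y (f : Hom X Y) (a : Fo F X), nt (Fm F f a) = Fm G f (nt a)
}.
Arguments nt {C F G} p X : rename.

Section CrossEffects.
Variables (C : PCCat) (F : AbFunctor C).

(* crP l X is the subgroup cr_{m+1} F (X, Y1, ..., Ym) of F (copl X l),
   l = [:: Y1; ...; Ym], following the iterated definition
     cr_1 F (X) = ker (F X -> F 0),
     cr_n F (X1, X2, rest) = cr_2 (cr_{n-1} F (-, rest)) (X1, X2)
       = ker (cr_{n-1}F(X1 v X2, rest) -> cr_{n-1}F(X1,rest) (+) cr_{n-1}F(X2,rest)). *)
Fixpoint crP (l : seq (Obj C)) : forall X : Obj C, Fo F (copl X l) -> Prop :=
  match l return forall X : Obj C, Fo F (copl X l) -> Prop with
  | [::] => fun X (x : Fo F X) => Fm F (to_zero X) x = 0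
  | Y :: l' => fun X x =>
      [/\ @crP l' (cop X Y) x,
          Fm F (mapl l' (r1 X Y)) x = 0 &
          Fm F (mapl l' (r2 X Y)) x = 0]
  end.
Arguments crP : clear implicits.

Definition reduced : Prop := forall x : Fo F (zero C), x = 0.

(* F is polynomial of degree <= n: cr_{n+1} F = 0 *)
Definition poly_le (n : nat) : Prop :=
  forall (X : Obj C) (l : seq (Obj C)), size l = n ->
    forall x : Fo F (copl X l), crP l X x -> x = 0.

End CrossEffects.
Arguments crP {C} F l X x.

Definition bij_on (A B : Type) (P : A -> Prop) (Q : B -> Prop) (f : A -> B) : Prop :=
  [/\ forall x, P x -> Q (f x),
      forall x y, P x -> P y -> f x = f y -> x = y &
      forall y, Q y -> exists2 x, P x & f x = y].

(* cr_k(phi)_{E,...,E} is an isomorphism (k >= 1): the restriction of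
   phi_{E v ... v E} to cr_k F (E,...,E) -> cr_k G (E,...,E) is bijective *)
Definition cr_iso (C : PCCat) (F G : AbFunctor C) (phi : NatTrans F G)
  (E : Obj C) (k : nat) : Prop :=
  bij_on (crP F (nseq k.-1 E) E) (crP G (nseq k.-1 E) E)
         (nt phi (copl E (nseq k.-1 E))).

(** Cross effects split coproducts: for [x] in [cr_m F (X v Y, rest)],
    [x - F(inl) F(r1) x - F(inr) F(r2) x] lies in [cr_(m+1) F (X, Y, rest)],
    so that group is the direct sum of [cr_m F (X, rest)], [cr_m F (Y, rest)]
    and [cr_(m+1) F (X, Y, rest)].  Hence [phi] is bijective on the first as
    soon as it is on the other three, and bijectivity on the first three
    gives it on the fourth.  Descending along [E^{v k}], [k <= n], yields the
    cross effects [cr_k(phi)_(E,...,E)]; ascending from these, together with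
    the vanishing of cross effects of order [> n], yields every
    [phi_(E^{v k})].  Since [E^{v k}] is a retract of [E^{v n}] for [k <= n]
    and every object is isomorphic to some [E^{v k}], the rest follows. *)
From HB Require Import structures.
From mathcomp Require Import all_boot all_algebra zify.
Set Implicit Arguments. Unset Strict Implicit. Unset Printing Implicit Defensive.
Import GRing.Theory.

Section PointedCategory.
Variable C : PCCat.
Implicit Types X Y Z A B : Obj C.

Lemma copair_ext X Y Z (h h' : Hom (cop X Y) Z) :
  comp (inl X Y) h = comp (inl X Y) h' -> comp (inr X Y) h = comp (inr X Y) h' ->
  h = h'.
Proof. by move=> e1 e2; rewrite (copair_uniq h) (copair_uniq h') e1 e2. Qed.

Lemma zmor_comp X Y Z (f : Hom Y Z) : comp (zmor X Y) f = zmor X Z.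
Proof. by rewrite /zmor -comp_assoc (from_zero_uniq (comp (from_zero Y) f)). Qed.

Lemma comp_zmor X Y Z (f : Hom X Y) : comp f (zmor Y Z) = zmor X Z.
Proof. by rewrite /zmor comp_assoc (to_zero_uniq (comp f (to_zero Y))). Qed.

Lemma copmap_comp A B A' B' A'' B'' (f : Hom A A') (g : Hom B B')
    (f' : Hom A' A'') (g' : Hom B' B'') :
  copmap (comp f f') (comp g g') = comp (copmap f g) (copmap f' g').
Proof.
apply: copair_ext; rewrite /copmap ?copair_inl ?copair_inr comp_assoc.
  by rewrite copair_inl -!comp_assoc copair_inl.
by rewrite copair_inr -!comp_assoc copair_inr.
Qed.

Lemma copmap_id A B : copmap (idm A) (idm B) = idm (cop A B).
Proof. by apply: copair_ext; rewrite /copmap ?copair_inl ?copair_inr comp_idl comp_idr. Qed.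

Lemma mapl_comp l : forall X Y Z (f : Hom X Y) (g : Hom Y Z),
  mapl l (comp f g) = comp (mapl l f) (mapl l g).
Proof. by elim: l => [//|W l IHl] X Y Z f g /=; rewrite -IHl -copmap_comp comp_idl. Qed.

Lemma mapl_id l : forall X, mapl l (idm X) = idm (copl X l).
Proof. by elim: l => [//|W l IHl] X /=; rewrite copmap_id IHl. Qed.

Lemma inl_r1 X Y : comp (inl X Y) (r1 X Y) = idm X.
Proof. exact: copair_inl. Qed.

Lemma inr_r1 X Y : comp (inr X Y) (r1 X Y) = zmor Y X.
Proof. exact: copair_inr. Qed.

Lemma inl_r2 X Y : comp (inl X Y) (r2 X Y) = zmor X Y.
Proof. exact: copair_inl. Qed.

Lemma inr_r2 X Y : comp (inr X Y) (r2 X Y) = idm Y.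
Proof. exact: copair_inr. Qed.

Lemma copmap_r1 X X' Y (f : Hom X X') :
  comp (copmap f (idm Y)) (r1 X' Y) = comp (r1 X Y) f.
Proof.
apply: copair_ext; rewrite !comp_assoc /copmap ?copair_inl ?copair_inr.
  by rewrite -comp_assoc inl_r1 comp_idr comp_idl.
by rewrite -comp_assoc inr_r1 comp_idl zmor_comp.
Qed.

Lemma copmap_r2 X X' Y (f : Hom X X') : comp (copmap f (idm Y)) (r2 X' Y) = r2 X Y.
Proof.
apply: copair_ext; rewrite !comp_assoc /copmap ?copair_inl ?copair_inr.
  by rewrite -comp_assoc inl_r2 comp_zmor.
by rewrite -comp_assoc inr_r2 comp_idl.
Qed.

Lemma r2_inr_zero Y : comp (r2 (zero C) Y) (inr (zero C) Y) = idm _.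
Proof.
apply: copair_ext; rewrite comp_assoc.
  by rewrite inl_r2 comp_idr (from_zero_uniq (comp _ _)) (from_zero_uniq (inl _ _)).
by rewrite inr_r2 comp_idl comp_idr.
Qed.

Lemma copl_rcons l : forall X Y, copl X (rcons l Y) = cop (copl X l) Y.
Proof. by elim: l => //= W l IHl X Y; rewrite IHl. Qed.

Lemma EpowS (E : Obj C) k : Epow E k.+2 = cop (Epow E k.+1) E.
Proof. by rewrite /Epow -copl_rcons -cats1 -[[:: E]]/(nseq 1 E) -nseqD addn1. Qed.

Definition retract X Y := exists (i : Hom X Y) (r : Hom Y X), comp i r = idm X.

Lemma iso_retract X Y : iso X Y -> retract X Y.
Proof. by case=> i [r [e _]]; exists i, r. Qed.

Lemma retract_refl X : retract X X.
Proof. by exists (idm X), (idm X); rewrite comp_idl. Qed.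

Lemma retract_trans X Y Z : retract X Y -> retract Y Z -> retract X Z.
Proof.
move=> [i [r e]] [i' [r' e']]; exists (comp i i'), (comp r' r).
by rewrite comp_assoc -(comp_assoc i) e' comp_idr e.
Qed.

Lemma retract_zero X : retract (zero C) X.
Proof.
exists (from_zero X), (to_zero X).
by rewrite (to_zero_uniq (comp _ _)) (to_zero_uniq (idm _)).
Qed.

Lemma retract_cop X Y : retract X (cop X Y).
Proof. by exists (inl X Y), (r1 X Y); rewrite inl_r1. Qed.

Lemma retract_Epow (E : Obj C) k m : k <= m -> retract (Epow E k) (Epow E m).
Proof.
elim: m => [|m IHm]; first by rewrite leqn0 => /eqP ->; apply: retract_refl.
rewrite leq_eqVlt => /predU1P [->|]; first exact: retract_refl.
move/IHm/retract_trans; apply.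
case: m {IHm} => [|m]; first exact: retract_zero.
by rewrite EpowS; apply: retract_cop.
Qed.

End PointedCategory.

HB.instance Definition _ C (F : AbFunctor C) X Y (f : Hom X Y) :=
  GRing.isZmodMorphism.Build _ _ (Fm F f) (@Fm_sub C F X Y f).

HB.instance Definition _ C (F G : AbFunctor C) (phi : NatTrans F G) X :=
  GRing.isZmodMorphism.Build _ _ (nt phi X) (@nt_sub C F G phi X).

Section CrossEffects.
Local Open Scope ring_scope.
Variables (C : PCCat) (F : AbFunctor C).
Implicit Types X Y Z : Obj C.

Lemma Fm0 X Y (f : Hom X Y) : Fm F f 0 = 0.
Proof. by rewrite raddf0. Qed.

Lemma FmD X Y (f : Hom X Y) a b : Fm F f (a + b) = Fm F f a + Fm F f b.
Proof. by rewrite raddfD. Qed.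

Lemma Fm_mapl_comp l X Y Z (f : Hom X Y) (g : Hom Y Z) a :
  Fm F (mapl l (comp f g)) a = Fm F (mapl l g) (Fm F (mapl l f) a).
Proof. by rewrite mapl_comp Fm_comp. Qed.

Lemma Fm_mapl_id l X a : Fm F (mapl l (idm X)) a = a.
Proof. by rewrite mapl_id Fm_id. Qed.

Lemma crP0 l : forall X, crP F l X 0.
Proof. by elim: l => [|Y l IHl] X /=; rewrite ?Fm0. Qed.

Lemma crPB l : forall X a b, crP F l X a -> crP F l X b -> crP F l X (a - b).
Proof.
elim: l => [|Y l IHl] X a b /=; first by rewrite Fm_sub => -> ->; rewrite subrr.
by case=> ha ha1 ha2 [hb hb1 hb2]; split; rewrite ?Fm_sub ?ha1 ?hb1 ?ha2 ?hb2 ?subrr; auto.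
Qed.

Lemma crPD l X a b : crP F l X a -> crP F l X b -> crP F l X (a + b).
Proof.
move=> ha hb; rewrite -[b]opprK -[- b]sub0r.
by apply: crPB => //; apply: crPB => //; apply: crP0.
Qed.

Lemma crP_Fm l : forall X X' (f : Hom X X') x,
  crP F l X x -> crP F l X' (Fm F (mapl l f) x).
Proof.
elim: l => [|Y l IHl] X X' f x /=.
  by rewrite -Fm_comp (to_zero_uniq (comp f _)) => ->.
case=> hx hx1 hx2; split; first exact: IHl.
  by rewrite -Fm_comp -mapl_comp copmap_r1 Fm_mapl_comp hx1 Fm0.
by rewrite -Fm_comp -mapl_comp copmap_r2.
Qed.

Lemma crP_zero_eq0 l x : crP F l (zero C) x -> x = 0.
Proof.
case: l x => [|Y l] x /=; first by rewrite -(to_zero_uniq (idm _)) Fm_id.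
case=> _ _ hx2; rewrite -[x](@Fm_mapl_id l (cop (zero C) Y)) -r2_inr_zero.
by rewrite Fm_mapl_comp hx2 Fm0.
Qed.

Lemma Fm_zmor_crP l X Y x : crP F l X x -> Fm F (mapl l (zmor X Y)) x = 0.
Proof.
by move=> hx; rewrite Fm_mapl_comp (crP_zero_eq0 (crP_Fm (to_zero X) hx)) Fm0.
Qed.

Definition cross_part l X Y (x : Fo F (copl (cop X Y) l)) :=
  x - (Fm F (mapl l (inl X Y)) (Fm F (mapl l (r1 X Y)) x)
       + Fm F (mapl l (inr X Y)) (Fm F (mapl l (r2 X Y)) x)).

Lemma crP_cross_part l X Y x :
  crP F l (cop X Y) x -> crP F (Y :: l) X (cross_part x).
Proof.
move=> hx; have hx1 := crP_Fm (r1 X Y) hx; have hx2 := crP_Fm (r2 X Y) hx.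
split; rewrite /cross_part.
- by apply: crPB => //; apply: crPD; apply: crP_Fm.
- rewrite Fm_sub FmD -(Fm_mapl_comp (inl X Y)) -(Fm_mapl_comp (inr X Y)).
  by rewrite inl_r1 inr_r1 Fm_mapl_id Fm_zmor_crP // addr0 subrr.
- rewrite Fm_sub FmD -(Fm_mapl_comp (inl X Y)) -(Fm_mapl_comp (inr X Y)).
  by rewrite inl_r2 inr_r2 Fm_mapl_id Fm_zmor_crP // add0r subrr.
Qed.

Lemma crP_poly_eq0 n : poly_le F n ->
  forall l X x, (n <= size l)%N -> crP F l X x -> x = 0.
Proof.
move=> polyF; elim=> [|Y l IHl] X x size_l hx.
  by apply: (polyF X [::]) hx; apply/eqP; rewrite eq_sym -leqn0.
have [/polyF|size_neq] := eqVneq (size (Y :: l)) n; first exact.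
case: hx => hx _ _; apply: IHl hx.
by move: size_l size_neq => /=; lia.
Qed.

End CrossEffects.

Lemma inj_surj_bijective (A B : choiceType) (f : A -> B) :
  injective f -> (forall y, exists x, f x = y) -> bijective f.
Proof.
move=> f_inj f_surj.
have f_surjb y : exists x, f x == y by have [x <-] := f_surj y; exists x.
exists (fun y => xchoose (f_surjb y)) => [x|y]; last exact/eqP/(xchooseP (f_surjb y)).
by apply: f_inj; apply/eqP/(xchooseP (f_surjb (f x))).
Qed.

Section NaturalTransformation.
Local Open Scope ring_scope.
Variables (C : PCCat) (F G : AbFunctor C) (phi : NatTrans F G).
Implicit Types X Y Z : Obj C.

Lemma nt0 X : nt phi X 0 = 0.
Proof. by rewrite raddf0. Qed.

Lemma ntD X a b : nt phi X (a + b) = nt phi X a + nt phi X b.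
Proof. by rewrite raddfD. Qed.

Lemma crP_nt l : forall X x, crP F l X x -> crP G l X (nt phi _ x).
Proof.
elim: l => [|Y l IHl] X x /=; first by rewrite -nt_nat => ->; rewrite nt0.
by case=> hx hx1 hx2; split; rewrite -?nt_nat ?hx1 ?hx2 ?nt0 ?Fm0 //; apply: IHl.
Qed.

Definition cr_bij l X := bij_on (crP F l X) (crP G l X) (nt phi (copl X l)).

Lemma cr_bij_trivial l X :
  (forall x, crP F l X x -> x = 0) -> (forall y, crP G l X y -> y = 0) -> cr_bij l X.
Proof.
move=> hF hG; split.
- by move=> x /hF ->; rewrite nt0; apply: crP0.
- by move=> x y /hF -> /hF ->.
- by move=> y /hG ->; exists 0; rewrite ?nt0 ?Fm0 //; apply: crP0.
Qed.

Lemma cr_bij_eq0 l X x : cr_bij l X -> crP F l X x -> nt phi _ x = 0 -> x = 0.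
Proof. by case=> _ inj _ hx ex; apply: inj; rewrite ?ex ?nt0 //; apply: crP0. Qed.

Lemma cr_bij_cop l X Y : cr_bij l X -> cr_bij l Y -> cr_bij (Y :: l) X ->
  cr_bij l (cop X Y).
Proof.
move=> bijX bijY bijXY; split.
- exact: crP_nt.
- move=> x1 x2 h1 h2 e; apply/eqP; rewrite -subr_eq0; apply/eqP.
  have h := crPB h1 h2.
  have e0 : nt phi _ (x1 - x2) = 0 by rewrite nt_sub e subrr.
  have e1 : Fm F (mapl l (r1 X Y)) (x1 - x2) = 0.
    by apply: (cr_bij_eq0 bijX (crP_Fm _ h)); rewrite nt_nat e0 Fm0.
  have e2 : Fm F (mapl l (r2 X Y)) (x1 - x2) = 0.
    by apply: (cr_bij_eq0 bijY (crP_Fm _ h)); rewrite nt_nat e0 Fm0.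
  have := crP_cross_part h; rewrite /cross_part e1 e2 !Fm0 addr0 subr0.
  by move/(cr_bij_eq0 bijXY); apply.
- move=> y hy; case: bijX bijY bijXY => [_ _ surjX] [_ _ surjY] [_ _ surjXY].
  have [a ha ea] := surjX _ (crP_Fm (r1 X Y) hy).
  have [b hb eb] := surjY _ (crP_Fm (r2 X Y) hy).
  have [c [hc _ _] ec] := surjXY _ (crP_cross_part hy).
  exists (c + (Fm F (mapl l (inl X Y)) a + Fm F (mapl l (inr X Y)) b)).
    by apply: crPD => //; apply: crPD; apply: crP_Fm.
  by rewrite !ntD !nt_nat ea eb [nt _ _ c]ec /cross_part subrK.
Qed.

Lemma cr_bij_cons l X Y : cr_bij l (cop X Y) -> cr_bij l X -> cr_bij l Y ->
  cr_bij (Y :: l) X.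
Proof.
move=> [_ injXY surjXY] bijX bijY; split.
- exact: crP_nt.
- by move=> x1 x2 [h1 _ _] [h2 _ _]; apply: injXY.
- move=> y [hy hy1 hy2]; have [x hx ex] := surjXY _ hy.
  exists x => //; split => //.
  + by apply: (cr_bij_eq0 bijX (crP_Fm _ hx)); rewrite nt_nat ex.
  + by apply: (cr_bij_eq0 bijY (crP_Fm _ hx)); rewrite nt_nat ex.
Qed.

Lemma cr_bij_nil X : reduced F -> reduced G -> cr_bij [::] X <-> bijective (nt phi X).
Proof.
move=> redF redG; split=> [[_ inj surj]|[g ntK gK]].
- apply: inj_surj_bijective => [x y|y]; first exact: inj.
  by have [x _ <-] := surj y (redG _); exists x.
- split=> [x _|x y _ _|y _]; [exact: redG | exact: (can_inj ntK) | by exists (g y)].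
Qed.

Lemma bijective_retract X Y : retract X Y -> bijective (nt phi Y) -> bijective (nt phi X).
Proof.
move=> [i [r e]] [g ntK gK]; exists (fun y => Fm F r (g (Fm G i y))) => [x|y].
  by rewrite -nt_nat ntK -Fm_comp e Fm_id.
by rewrite nt_nat gK -Fm_comp e Fm_id.
Qed.

Section PowersOfE.
Local Open Scope nat_scope.
Variables (E : Obj C) (n : nat).

Lemma cr_bij_Epow_of_bijective :
  reduced F -> reduced G -> (forall k, k <= n -> bijective (nt phi (Epow E k))) ->
  forall m k, 0 < k -> m + k <= n -> cr_bij (nseq m E) (Epow E k).
Proof.
move=> redF redG bijE; elim=> [|m IHm] k k_gt0 mk_le.
  by apply/cr_bij_nil => //; apply: bijE.
case: k k_gt0 mk_le => // k _ mk_le; apply: cr_bij_cons.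
- by rewrite -EpowS; apply: IHm => //; lia.
- by apply: IHm => //; lia.
- by apply: (IHm 1) => //; lia.
Qed.

Lemma cr_bij_Epow_of_cr_iso : poly_le F n -> poly_le G n ->
  (forall k, 1 <= k <= n -> cr_iso phi E k) ->
  forall k m, cr_bij (nseq m E) (Epow E k.+1).
Proof.
move=> polyF polyG crE.
have crE' m : cr_bij (nseq m E) E.
  have [m_lt|n_le] := ltnP m n; first exact: (crE m.+1).
  by apply: cr_bij_trivial => x;
    [apply: (crP_poly_eq0 polyF) | apply: (crP_poly_eq0 polyG)]; rewrite size_nseq.
elim=> [|k IHk] m; first exact: crE'.
by rewrite EpowS; apply: cr_bij_cop; [apply: IHk | apply: crE' | apply: (IHk m.+1)].
Qed.

End PowersOfE.
End NaturalTransformation.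

Theorem proposition1p17 (C : PCCat) (E : Obj C)
  (hE : forall X : Obj C, exists k : nat, iso X (Epow E k))
  (n : nat) (F G : AbFunctor C)
  (redF : reduced F) (redG : reduced G)
  (polyF : poly_le F n) (polyG : poly_le G n)
  (phi : NatTrans F G) :
  let P1 := forall X : Obj C, bijective (nt phi X) in
  let P2 := forall k : nat, k <= n -> bijective (nt phi (Epow E k)) in
  let P3 := bijective (nt phi (Epow E n)) in
  let P4 := forall k : nat, 1 <= k <= n -> cr_iso phi E k in
  [/\ P1 <-> P2, P1 <-> P3 & P1 <-> P4].
Proof.
move=> P1 P2 P3 P4.
have P12 : P1 -> P2 by move=> bij k _; apply: bij.
have P13 : P1 -> P3 by move=> bij; apply: bij.
have P32 : P3 -> P2 by move=> bij k k_le; apply: bijective_retract (retract_Epow E k_le) bij.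
have P24 : P2 -> P4.
  move=> bij [//|k] /andP [_ k_le].
  by apply: (cr_bij_Epow_of_bijective redF redG bij (m := k) (k := 1)); rewrite ?addn1.
have P41 : P4 -> P1.
  move=> crE X; have [k /iso_retract XE] := hE X.
  apply: bijective_retract (retract_trans XE (retract_Epow E (leqnSn k))) _.
  by apply/cr_bij_nil => //; exact: (cr_bij_Epow_of_cr_iso polyF polyG crE k 0).
by split; split; auto.
Qed.
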